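(* The following two statements are equivalent: (a) Every 2-connected cubic graph $G$ admits a proper $5$-edge-coloring $c$ with $|N_G(c)|\le 5$. (b) There exists a sublinear function $f:\mathbb{N}\to\mathbb{N}$ such that every 2-connected cubic graph $G$ admits a proper $5$-edge-coloring $c$ with $|N_G(c)|\le f(|V(G)|)$.
   Context: Graphs are finite, undirected, loopless, and may contain parallel edges. A proper $k$-edge-coloring of $G$ is a map $c:E(G)\to\{1,\dots,k\}$ with adjacent edges receiving different colors. For such $c$ and a vertex $v$, $S_c(v)$ is the set of colors on edges incident to $v$. An edge $uv$ of a cubic graph is poor if $|S_c(u)\cup S_c(v)|=3$, rich if $|S_c(u)\cup S_c(v)|=5$, and abnormal if it is neither poor nor rich. $N_G(c)$ denotes the set of abnormal edges of $G$ with respect to $c$. A function $f:\mathbb{N}\to\mathbb{N}$ is sublinear if $\lim_{n\to\infty} f(n)/n=0$. *)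

From mathcomp Require Import all_boot.
From Stdlib Require Rdefinitions Raxioms RIneq Rseries.

Set Implicit Arguments.
Unset Strict Implicit.
Unset Printing Implicit Defensive.

(* A finite multigraph: vertex type V, edge type E, each edge e has endpoints
   ends e = (u, v).  Parallel edges are allowed (distinct edges may have the
   same endpoints). *)
Section Graphs.
Variables (V E : finType) (ends : E -> V * V).

Definition loopless : Prop := forall e : E, (ends e).1 != (ends e).2.

Definition incident (v : V) (e : E) : bool :=
  (v == (ends e).1) || (v == (ends e).2).

(* cubic: every vertex has degree 3 (loopless, so degree = #incident edges) *)
Definition cubic : Prop := forall v : V, #|[set e | incident v e]| = 3.

Definition adj (x y : V) : bool :=
  [exists e : E, (ends e == (x, y)) || (ends e == (y, x))].

Definition connected_graph : Prop :=
  forall x y : V, connect adj x y.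

Definition connected_minus (v : V) : Prop :=
  forall x y : V, x != v -> y != v ->
    connect (fun a b => [&& a != v, b != v & adj a b]) x y.

Definition two_connected : Prop :=
  1 < #|V| /\ connected_graph /\ forall v : V, connected_minus v.

Definition proper_coloring (k : nat) (c : E -> 'I_k) : Prop :=
  forall e f : E, e != f ->
    (exists v : V, incident v e && incident v f) -> c e != c f.

Definition Sc (k : nat) (c : E -> 'I_k) (v : V) : {set 'I_k} :=
  [set c e | e in [set e | incident v e]].

Definition poor_edge (k : nat) (c : E -> 'I_k) (e : E) : bool :=
  #|Sc c (ends e).1 :|: Sc c (ends e).2| == 3.

Definition rich_edge (k : nat) (c : E -> 'I_k) (e : E) : bool :=
  #|Sc c (ends e).1 :|: Sc c (ends e).2| == 5.

Definition abnormal_edges (k : nat) (c : E -> 'I_k) : {set E} :=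
  [set e | ~~ poor_edge c e & ~~ rich_edge c e].

End Graphs.

Definition two_conn_cubic (V E : finType) (ends : E -> V * V) : Prop :=
  loopless ends /\ cubic ends /\ two_connected ends.

Definition sublinear (f : nat -> nat) : Prop :=
  Rseries.Un_cv
    (fun n => Rdefinitions.Rdiv (Raxioms.INR (f n)) (Raxioms.INR n))
    Rdefinitions.R0.

From mathcomp Require Import all_boot zify.
From Stdlib Require Reals Lra Classical.

Set Implicit Arguments.
Unset Strict Implicit.
Unset Printing Implicit Defensive.

(* (a) -> (b) is immediate: constant functions are sublinear.
   (b) -> (a): suppose G violates (a) and pick an edge e0 = u0v0.  The
   necklace of n >= 2 copies of G - e0, where v0 of copy j is joined to u0
   of copy j + 1 (mod n), is again a 2-connected cubic graph, on n|V(G)|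
   vertices.  Under any proper 5-colouring of the necklace every copy must
   contain an abnormal edge: otherwise restricting to that copy and recolouring
   e0 with a colour missing around it gives a colouring of G whose abnormal
   edges all meet e0, hence at most 5 of them.  So f(n|V(G)|) >= n for all
   n >= 2, contradicting sublinearity. *)

Definition avoiding (T : eqType) (r : rel T) (z : T) : rel T :=
  fun a b => [&& a != z, b != z & r a b].

Lemma avoiding_sym (T : eqType) (r : rel T) (z : T) :
  symmetric r -> symmetric (avoiding r z).
Proof. by move=> r_sym a b; rewrite /avoiding r_sym andbCA. Qed.

Lemma connect_map (T T' : finType) (f : T -> T') (r : rel T) (r' : rel T') :
  (forall a b, r a b -> r' (f a) (f b)) ->
  forall x y, connect r x y -> connect r' (f x) (f y).
Proof.
move=> f_hom x y /connectP [p]; elim: p x => [|z p IH] x /=; first by move=> _ ->.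
case/andP=> rxz pz y_last.
exact: connect_trans (connect1 (f_hom _ _ rxz)) (IH _ pz y_last).
Qed.

Lemma connect_to_first (T : finType) (r r' : rel T) (B : pred T) x y :
  (forall a b, ~~ B a -> r a b -> r' a b) ->
  connect r x y -> B y -> exists2 z, B z & connect r' x z.
Proof.
move=> r_r' /connectP [p]; elim: p x => [|z p IH] x /=; first by move=> _ -> By; exists x.
case/andP=> rxz pz y_last By; case Bx: (B x); first by exists x.
have [t Bt zt] := IH _ pz y_last By; exists t => //.
by apply: connect_trans zt; apply/connect1/r_r'; rewrite ?Bx.
Qed.

Lemma ordS_closed n (P : pred 'I_n) :
  (forall j, P j -> P (ordS j)) -> forall i j, P i -> P j.
Proof.
move=> P_ordS i j Pi.
have iter_val t : val (iter t (@ordS n) i) = (i + t) %% n.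
  elim: t => [|t IH] /=; first by rewrite addn0 modn_small.
  by rewrite IH -addn1 modnDml addn1 addnS.
have -> : j = iter (j + n - i) (@ordS n) i.
  apply/val_inj; rewrite iter_val; have := ltn_ord i; have := ltn_ord j.
  by move=> lt_j lt_i; rewrite (_ : i + _ = j + n) ?modnDr ?modn_small //; lia.
by elim: (j + n - i) => //= t; apply: P_ordS.
Qed.

Lemma ordS_neq n (i : 'I_n) : 1 < n -> ordS i != i.
Proof.
move=> n_gt1; rewrite -val_eqE /=; have := ltn_ord i.
rewrite leq_eqVlt => /orP [/eqP i1n|i1n]; last by rewrite modn_small // gtn_eqF.
by rewrite i1n modnn; lia.
Qed.

Module Sublinear.
Import Reals Lra.
Local Open Scope R_scope.

(* Every constant function is sublinear: a / n < eps as soon as n * eps > a. *)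
Lemma const_sublinear (a : nat) : sublinear (fun _ => a).
Proof.
move=> eps eps_gt0; have [N HN] := INR_archimed eps (INR a) eps_gt0.
exists N.+1 => n /leP Nn; rewrite /Rdist Rminus_0_r.
have N_lt_n : INR N < INR n by apply: lt_INR; apply/ltP.
have n_gt0 : 0 < INR n by apply: Rle_lt_trans N_lt_n; apply: pos_INR.
have a_ge0 := pos_INR a.
rewrite Rabs_right; last by apply: Rle_ge; apply: Rle_mult_inv_pos.
apply: (Rmult_lt_reg_r (INR n)) => //.
rewrite /Rdiv Rmult_assoc Rinv_l; last lra.
nra.
Qed.

(* If f (m * n) >= n for all n >= 2 (with m > 0), then f(N) / N >= 1 / m
   along the multiples N of m, so f is not sublinear. *)
Lemma not_sublinear (f : nat -> nat) (m : nat) : (0 < m)%nat ->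
  (forall n, (1 < n -> n <= f (m * n))%nat) -> ~ sublinear f.
Proof.
move=> m_gt0 f_big f_sub.
have m_pos : 0 < INR m by apply: lt_0_INR; apply/ltP.
have [N HN] := f_sub _ (Rinv_0_lt_compat _ m_pos).
set n := N.+2; have n_pos : 0 < INR n by apply: lt_0_INR; apply/ltP.
have Nmn : (m * n >= N)%coq_nat by rewrite /n; move/ltP: m_gt0; nia.
have := HN _ Nmn; rewrite /Rdist Rminus_0_r mult_INR.
have fn : INR n <= INR (f (m * n)%nat) by apply: le_INR; apply/leP; apply: f_big.
have ratio : / INR m <= INR (f (m * n)%nat) / (INR m * INR n).
  have -> : / INR m = INR n / (INR m * INR n) by field; lra.
  apply: Rmult_le_compat_r => //; apply: Rlt_le; apply: Rinv_0_lt_compat; nra.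
have inv_m_pos := Rinv_0_lt_compat _ m_pos.
by rewrite Rabs_right; lra.
Qed.

End Sublinear.

Section MultigraphFacts.
Variables (V E : finType) (ends : E -> V * V).

Lemma adj_sym : symmetric (adj ends).
Proof. by move=> x y; apply/existsP/existsP => -[e He]; exists e; rewrite orbC. Qed.

Lemma edge_other_end x e : loopless ends -> incident ends x e ->
  exists2 y, y != x & (ends e == (x, y)) || (ends e == (y, x)).
Proof.
move=> no_loop; rewrite /incident => /orP [] /eqP x_end.
  by exists (ends e).2; rewrite ?x_end -?surjective_pairing ?eqxx // eq_sym no_loop.
by exists (ends e).1; rewrite ?x_end -?surjective_pairing ?eqxx ?orbT // no_loop.
Qed.

(* A loopless cubic graph on at least two vertices without cut vertices is
   2-connected; connectivity itself comes from removing a third vertex, or,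
   on exactly two vertices, from an edge joining them. *)
Lemma two_connected_of_no_cut : loopless ends -> cubic ends -> 1 < #|V| ->
  (forall z, connected_minus ends z) -> two_connected ends.
Proof.
move=> no_loop deg3 V_gt1 no_cut; split=> //; split=> // x y.
have [->|xy] := eqVneq x y; first exact: connect0.
case: (pickP [pred z | (z != x) && (z != y)]) => [z /andP [zx zy]|only_xy].
  apply: connect_sub (no_cut z x y _ _); rewrite 1?eq_sym //.
  by move=> a b /and3P [_ _ ab]; apply: connect1.
have : 0 < #|[set e | incident ends x e]| by rewrite deg3.
case/card_gt0P => e; rewrite inE => x_e.
have [o ox e_xo] := edge_other_end no_loop x_e.
have /eqP oy : o == y by have := only_xy o; rewrite /= ox /= => /negbFE.
by apply: connect1; apply/existsP; exists e; rewrite -oy.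
Qed.

End MultigraphFacts.

Section Necklace.
Variables (V E : finType) (ends : E -> V * V) (e0 : E) (n : nat).

Let u0 := (ends e0).1.
Let v0 := (ends e0).2.

Definition necklace_ends (x : E * 'I_n) : (V * 'I_n) * (V * 'I_n) :=
  if x.1 == e0 then ((v0, x.2), (u0, ordS x.2))
  else (((ends x.1).1, x.2), ((ends x.1).2, x.2)).

(* The edges of the necklace at (w, j) are the images of the edges of G at
   w under this injection (only the copy of e0 at u0 comes from copy j - 1). *)
Definition necklace_edge (w : V) (j : 'I_n) (e : E) : E * 'I_n :=
  if (e == e0) && (w == u0) then (e0, ord_pred j) else (e, j).

Lemma necklace_edge_inj w j : injective (necklace_edge w j).
Proof.
move=> x y; rewrite /necklace_edge.
by do 2!case: ifP => [/andP [/eqP -> _]|_] //; case=> ->.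
Qed.

Hypothesis no_loop : loopless ends.

Lemma u0_neq_v0 : u0 != v0. Proof. exact: no_loop. Qed.

Lemma necklace_incident w j :
  [set x | incident necklace_ends (w, j) x]
  = necklace_edge w j @: [set e | incident ends w e].
Proof.
apply/setP => -[e i]; rewrite inE; apply/idP/imsetP.
  rewrite /incident /necklace_ends /=; case: (eqVneq e e0) => [->|ne] /=.
    rewrite !xpair_eqE => /orP [/andP [/eqP -> /eqP ->]|/andP [/eqP -> /eqP ->]].
      exists e0; first by rewrite inE /incident eqxx orbT.
      by rewrite /necklace_edge eqxx eq_sym (negbTE u0_neq_v0).
    by exists e0; rewrite ?inE /incident ?eqxx // /necklace_edge !eqxx ordSK.
  rewrite !xpair_eqE => /orP [/andP [/eqP -> /eqP ->]|/andP [/eqP -> /eqP ->]].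
    by exists e; rewrite ?inE /incident ?eqxx // /necklace_edge (negbTE ne).
  by exists e; rewrite ?inE /incident ?eqxx ?orbT // /necklace_edge (negbTE ne).
case=> x; rewrite inE /incident /necklace_edge => w_x ->.
have [x_e0|ne] := eqVneq x e0; last first.
  by rewrite /necklace_ends /= (negbTE ne) !xpair_eqE eqxx !andbT.
subst x; have [->|wu] := eqVneq w u0; rewrite /necklace_ends !eqxx /= !xpair_eqE.
  by rewrite ord_predK !eqxx orbT.
by move: w_x; rewrite -/u0 -/v0 (negbTE wu) /= => ->; rewrite eqxx.
Qed.

Lemma necklace_loopless : loopless necklace_ends.
Proof.
move=> [e j]; rewrite /necklace_ends; case: (e == e0); rewrite /= xpair_eqE negb_and.
  by rewrite eq_sym u0_neq_v0.
by rewrite no_loop.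
Qed.

Hypothesis deg3 : cubic ends.

Lemma necklace_cubic : cubic necklace_ends.
Proof.
move=> [w j].
by rewrite necklace_incident card_imset; [exact: deg3 | exact: necklace_edge_inj].
Qed.

Lemma necklace_incident_copy (z : V) (e : E) (j : 'I_n) : e != e0 ->
  incident necklace_ends (z, j) (e, j) = incident ends z e.
Proof.
by move=> ne; rewrite /incident /necklace_ends /= (negbTE ne) /= !xpair_eqE eqxx !andbT.
Qed.

Definition adj_cut (a b : V) : bool :=
  [exists e, (e != e0) && ((ends e == (a, b)) || (ends e == (b, a)))].

Lemma adj_cut_sym : symmetric adj_cut.
Proof. by move=> x y; apply/existsP/existsP => -[e He]; exists e; rewrite orbC. Qed.

Lemma adj_cut_copy j a b : adj_cut a b -> adj necklace_ends (a, j) (b, j).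
Proof.
case/existsP=> e /andP [ne ab]; apply/existsP; exists (e, j).
rewrite /necklace_ends /= (negbTE ne) !xpair_eqE.
by case/orP: ab => /eqP ->; rewrite !eqxx ?orbT.
Qed.

Lemma necklace_link j : adj necklace_ends (v0, j) (u0, ordS j).
Proof. by apply/existsP; exists (e0, j); rewrite /necklace_ends /= !eqxx. Qed.

Lemma adj_cut_off_e0 a b : ~~ ((a == u0) || (a == v0)) -> adj ends a b -> adj_cut a b.
Proof.
move=> a_off /existsP [e ab]; apply/existsP; exists e; rewrite ab andbT.
apply: contraNneq a_off => e_e0.
by case/orP: ab => /eqP; rewrite e_e0 /u0 /v0 => ->; rewrite eqxx ?orbT.
Qed.

Hypothesis conn2 : two_connected ends.

Lemma reach_cut_end w a : a != w ->
  exists2 t, ((t == u0) || (t == v0)) && (t != w) & connect (avoiding adj_cut w) a t.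
Proof.
move=> aw; pose t0 := if u0 == w then v0 else u0.
have t0_end : ((t0 == u0) || (t0 == v0)) && (t0 != w).
  rewrite /t0; case: (eqVneq u0 w) => [<-|//]; first by rewrite eqxx orbT eq_sym u0_neq_v0.
  by rewrite eqxx.
apply: connect_to_first (conn2.2.2 w a t0 aw (proj2 (andP t0_end))) t0_end.
move=> x y x_off /and3P [xw yw xy]; rewrite /avoiding xw yw adj_cut_off_e0 //.
by apply: contra x_off => ->; rewrite xw.
Qed.

(* G - e0 is connected: a cubic 2-connected graph has no bridge. *)
Lemma cut_connected x : connect adj_cut x v0.
Proof.
have from_other y : y != u0 -> connect adj_cut y v0.
  move=> yu; have [t /andP [t_end tu] yt] := reach_cut_end yu.
  have /eqP <- : t == v0 by move: t_end; rewrite (negbTE tu).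
  by apply: connect_sub yt => a b /and3P [_ _ ab]; apply: connect1.
have [->|xu] := eqVneq x u0; last exact: from_other.
have : 0 < #|[set e | incident ends u0 e] :\ e0|.
  have u0_e0 : e0 \in [set e | incident ends u0 e] by rewrite inE /incident eqxx.
  by have := deg3 u0; rewrite (cardsD1 e0) u0_e0; lia.
case/card_gt0P => e1; rewrite !inE => /andP [ne1 u_e1].
have [z zu e1_uz] := edge_other_end no_loop u_e1.
apply: connect_trans (from_other z zu); apply: connect1; apply/existsP; exists e1.
by rewrite ne1 e1_uz.
Qed.

Lemma copy_neq (a w : V) (i j : 'I_n) : j != i -> (a, j) != (w, i).
Proof. by move=> ji; rewrite xpair_eqE negb_and ji orbT. Qed.

(* Removing a vertex (w, i) of the necklace (with at least two copies)
   leaves a connected graph; every other vertex reaches the hub (u0, i + 1). *)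
Section NecklaceMinusVertex.
Variables (w : V) (i : 'I_n).
Hypothesis n_gt1 : 1 < n.

Let avoid := avoiding (adj necklace_ends) (w, i).
Let hub := (u0, ordS i).

(* Copies other than i are intact copies of the connected graph G - e0. *)
Lemma copy_connected j a b : j != i -> connect avoid (a, j) (b, j).
Proof.
move=> ji; have cut_ab : connect adj_cut a b.
  by apply: connect_trans (cut_connected a) _; rewrite (sym_connect_sym adj_cut_sym) cut_connected.
apply: (@connect_map _ _ (fun x => (x, j)) adj_cut avoid _ a b cut_ab) => x y xy.
by rewrite /avoid /avoiding !copy_neq // adj_cut_copy.
Qed.

(* Going around the necklace, the links (v0, j) -- (u0, j + 1) join all the
   copies other than i into one piece. *)
Lemma other_copies_reach_hub j : j != i -> connect avoid (u0, j) hub.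
Proof.
move=> ji; pose P k := (k == i) || connect avoid (u0, k) hub.
suff : P j by rewrite /P (negbTE ji).
apply: (@ordS_closed n P _ i j); last by rewrite /P eqxx.
move=> k; rewrite /P; have [_|Sk_i] := eqVneq (ordS k) i; first by [].
have [-> _|ki /= k_hub] := eqVneq k i; first exact: connect0.
apply: (connect_trans _ k_hub); apply: (connect_trans _ (copy_connected v0 u0 ki)).
apply: connect1; rewrite /avoid /avoiding !copy_neq //.
by rewrite adj_sym necklace_link.
Qed.

(* Inside copy i minus w, every vertex reaches u0 or v0, which are linked to
   the neighbouring copies. *)
Lemma necklace_connected_minus : connected_minus necklace_ends (w, i).
Proof.
have Si : ordS i != i by exact: ordS_neq.
suff to_hub x : x != (w, i) -> connect avoid x hub.
  move=> x y xz yz; apply: connect_trans (to_hub x xz) _.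
  by rewrite (sym_connect_sym (avoiding_sym _ (adj_sym _))) to_hub.
case: x => a j; have [->|ji] := eqVneq j i; last first.
  by move=> _; apply: connect_trans (other_copies_reach_hub ji); exact: copy_connected.
rewrite xpair_eqE eqxx andbT => aw.
have [t /andP [t_end tw] a_t] := reach_cut_end aw.
have a_t_copy : connect avoid (a, i) (t, i).
  apply: (@connect_map _ _ (fun x => (x, i)) _ avoid _ a t a_t) => x y /and3P [xw yw xy].
  by rewrite /avoid /avoiding !xpair_eqE eqxx !andbT xw yw adj_cut_copy.
apply: (connect_trans a_t_copy).
have [/eqP tu|/eqP tv] := orP t_end; last first.
  apply: connect1; rewrite /avoid /avoiding /hub (copy_neq _ _ Si) xpair_eqE eqxx andbT.
  by rewrite tw tv necklace_link.
have Pi : ord_pred i != i.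
  by apply: contraNneq Si => Pi_i; rewrite -{1}Pi_i ord_predK.
apply: (connect_trans _ (other_copies_reach_hub Pi)).
apply: (connect_trans _ (copy_connected v0 u0 Pi)); apply: connect1.
rewrite /avoid /avoiding (copy_neq _ _ Pi) xpair_eqE eqxx andbT tw tu adj_sym.
by have := necklace_link (ord_pred i); rewrite ord_predK.
Qed.

End NecklaceMinusVertex.

Lemma necklace_two_conn_cubic : 1 < n -> two_conn_cubic necklace_ends.
Proof.
move=> n_gt1; split; first exact: necklace_loopless.
split; first exact: necklace_cubic.
apply: two_connected_of_no_cut; [exact: necklace_loopless | exact: necklace_cubic | |].
  by rewrite card_prod card_ord; have := conn2.1; nia.
by move=> [w i]; apply: necklace_connected_minus.
Qed.

End Necklace.

Arguments necklace_ends {V E} ends e0 n x.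

(* A proper 5-colouring of the necklace restricts to copy i of G; recolouring
   e0 with a colour unused around it keeps it proper, and only edges at u0 or
   v0 can change status.  So a copy without abnormal edges yields a colouring
   of G with at most 5 abnormal edges. *)
Section RestrictColouring.
Variables (V E : finType) (ends : E -> V * V) (e0 : E) (n : nat).
Variables (c' : E * 'I_n -> 'I_5) (i : 'I_n).
Hypothesis no_loop : loopless ends.
Hypothesis deg3 : cubic ends.
Hypothesis proper' : proper_coloring (necklace_ends ends e0 n) c'.

Let u0 := (ends e0).1.
Let v0 := (ends e0).2.

Definition near_e0 : {set E} := [set x | incident ends u0 x || incident ends v0 x].

Lemma near_e0_of_end z x : incident ends z e0 -> incident ends z x -> x \in near_e0.
Proof. by rewrite inE; case/orP=> /eqP -> ->; rewrite ?orbT. Qed.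

(* Two sets of three edges sharing e0. *)
Lemma card_near_e0 : #|near_e0| <= 5.
Proof.
have e0_u0 : e0 \in [set x | incident ends u0 x] by rewrite inE /incident eqxx.
have e0_v0 : e0 \in [set x | incident ends v0 x] by rewrite inE /incident eqxx orbT.
have -> : near_e0 = [set x | incident ends u0 x] :|: [set x | incident ends v0 x].
  by apply/setP => x; rewrite !inE.
have := cardsUI [set x | incident ends u0 x] [set x | incident ends v0 x].
have : 0 < #|[set x | incident ends u0 x] :&: [set x | incident ends v0 x]|.
  by apply/card_gt0P; exists e0; rewrite inE e0_u0 e0_v0.
by rewrite !deg3; lia.
Qed.

Lemma free_colour : exists col, col \notin [set c' (x, i) | x in near_e0 :\ e0].
Proof.
pose used := [set c' (x, i) | x in near_e0 :\ e0].
have used_small : #|used| <= 4.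
  rewrite /used.
  have := leq_imset_card (fun x => c' (x, i)) (near_e0 :\ e0).
  have e0_near : e0 \in near_e0 by rewrite inE /incident eqxx.
  by have := card_near_e0; rewrite (cardsD1 e0) e0_near; lia.
have : 0 < #|~: used| by rewrite cardsCs setCK card_ord; lia.
by case/card_gt0P => col; rewrite inE; exists col.
Qed.

Section Recolour.
Variable col : 'I_5.
Hypothesis col_free : col \notin [set c' (x, i) | x in near_e0 :\ e0].

Definition restricted_colouring (x : E) : 'I_5 := if x == e0 then col else c' (x, i).

Lemma restricted_proper : proper_coloring ends restricted_colouring.
Proof.
have used x : x != e0 -> x \in near_e0 -> c' (x, i) != col.
  move=> x_e0 x_near; apply: contraNneq col_free => <-.
  by apply/imsetP; exists x; rewrite // in_setD1 x_e0.
move=> e f ef [z /andP [z_e z_f]]; rewrite /restricted_colouring.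
have [e_e0|e_e0] := eqVneq e e0; have [f_e0|f_e0] := eqVneq f e0.
- by move: ef; rewrite e_e0 f_e0 eqxx.
- by rewrite eq_sym used // (near_e0_of_end (z := z)) -?e_e0.
- by rewrite used // (near_e0_of_end (z := z)) -?f_e0.
apply: proper' => //; first by rewrite xpair_eqE negb_and ef.
by exists (z, i); rewrite !necklace_incident_copy // z_e z_f.
Qed.

Lemma restricted_Sc a : a != u0 -> a != v0 ->
  Sc (necklace_ends ends e0 n) c' (a, i) = Sc ends restricted_colouring a.
Proof.
move=> au av; rewrite /Sc necklace_incident // -(imset_comp c'); apply: eq_in_imset => y.
rewrite inE => a_y /=; rewrite /necklace_edge /restricted_colouring.
have y_e0 : y != e0.
  by apply: contraTneq a_y => ->; rewrite /incident -/u0 -/v0 (negbTE au) (negbTE av).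
by rewrite (negbTE y_e0) (negbTE au).
Qed.

Lemma restricted_abnormal :
  (forall x, (x, i) \notin abnormal_edges (necklace_ends ends e0 n) c') ->
  abnormal_edges ends restricted_colouring \subset near_e0.
Proof.
move=> clean; apply/subsetP => x; apply: contraTT => x_far.
have x_e0 : x != e0 by apply: contraNneq x_far => ->; rewrite inE /incident eqxx.
move: x_far (clean x); rewrite !inE /incident !negb_or => /andP [/andP [u1 u2] /andP [v1 v2]].
rewrite /poor_edge /rich_edge /necklace_ends /= (negbTE x_e0) /=.
by rewrite !restricted_Sc // 1?eq_sym.
Qed.

End Recolour.

Lemma clean_copy_colouring :
  (forall x, (x, i) \notin abnormal_edges (necklace_ends ends e0 n) c') ->
  exists c : E -> 'I_5, proper_coloring ends c /\ #|abnormal_edges ends c| <= 5.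
Proof.
move=> clean; have [col col_free] := free_colour.
exists (restricted_colouring col); split; first exact: restricted_proper.
by apply: leq_trans card_near_e0; apply/subset_leq_card/restricted_abnormal.
Qed.

End RestrictColouring.

Lemma necklace_abnormal_lower_bound (V E : finType) (ends : E -> V * V) (e0 : E) n :
  loopless ends -> cubic ends ->
  (forall c : E -> 'I_5, proper_coloring ends c -> 5 < #|abnormal_edges ends c|) ->
  forall c' : E * 'I_n -> 'I_5, proper_coloring (necklace_ends ends e0 n) c' ->
  n <= #|abnormal_edges (necklace_ends ends e0 n) c'|.
Proof.
move=> no_loop deg3 no_good c' proper'.
have copy_hit i : exists x, (x, i) \in abnormal_edges (necklace_ends ends e0 n) c'.
  case: (boolP [exists x, (x, i) \in abnormal_edges (necklace_ends ends e0 n) c']).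
    by move/existsP.
  move/existsPn/(clean_copy_colouring no_loop deg3 proper') => [c [proper_c few]].
  by have := no_good c proper_c; rewrite ltnNge few.
have : [set: 'I_n] \subset [set x.2 | x in abnormal_edges (necklace_ends ends e0 n) c'].
  by apply/subsetP => i _; have [x x_ab] := copy_hit i; apply/imsetP; exists (x, i).
move/subset_leq_card; rewrite cardsT card_ord => /leq_trans; apply.
exact: leq_imset_card.
Qed.

Theorem mainTheorem2 :
  (forall (V E : finType) (ends : E -> V * V), two_conn_cubic ends ->
     exists c : E -> 'I_5,
       proper_coloring ends c /\ #|abnormal_edges ends c| <= 5)
  <->
  (exists f : nat -> nat, sublinear f /\
     forall (V E : finType) (ends : E -> V * V), two_conn_cubic ends ->
       exists c : E -> 'I_5,
         proper_coloring ends c /\ #|abnormal_edges ends c| <= f #|V|).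
Proof.
split=> [good5 | [f [f_sub good_f]] V E ends G_ok].
  by exists (fun _ => 5); split; [exact: Sublinear.const_sublinear | exact: good5].
apply: Classical_Prop.NNPP => no_colouring.
have no_good (c : E -> 'I_5) :
  proper_coloring ends c -> 5 < #|abnormal_edges ends c|.
  by move=> proper_c; rewrite ltnNge; apply/negP => few; apply: no_colouring; exists c.
have [no_loop [deg3 conn2]] := G_ok.
have V_gt0 : 0 < #|V| by case: conn2 => /ltnW.
have [v _] := card_gt0P V_gt0.
have [e0 _] : exists e0, e0 \in [set e | incident ends v e] by apply/card_gt0P; rewrite deg3.
apply: (Sublinear.not_sublinear V_gt0 _ f_sub) => n n_gt1.
have necklace_ok := necklace_two_conn_cubic e0 no_loop deg3 conn2 n_gt1.
have [c' [proper' few]] := good_f _ _ _ necklace_ok.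
apply: leq_trans (necklace_abnormal_lower_bound (e0 := e0) no_loop deg3 no_good proper') _.
by rewrite card_prod card_ord in few.
Qed.
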